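(* Let $\mathcal{Y}$ be finite (with the discrete topology) and let $\Gamma\colon\Delta(\mathcal{Y})\to2^{\mathcal{V}}$ be a property identified by $\nu$. For every $\gamma\in\mathcal{V}$ with $\Gamma^{-1}(\gamma)\ne\emptyset$, $$\{g\in C(\mathcal{Y}):g\le\alpha\nu_\gamma\text{ for some }\alpha\in\mathbb{R}\}=\mathcal{G}_{\Gamma^{-1}(\gamma)},$$ i.e. no closure is needed.
   Context: For finite $\mathcal{Y}$, $C(\mathcal{Y})\cong\mathbb{R}^{\mathcal{Y}}$ with coordinatewise order, $\Delta(\mathcal{Y})$ is the probability simplex, $\mathbb{E}_\phi[f]=\sum_y\phi(y)f(y)$. Level set: $\Gamma^{-1}(\gamma)=\{\phi\in\Delta(\mathcal{Y}):\gamma\in\Gamma(\phi)\}$. A function $\nu\colon\mathcal{Y}\times\mathcal{V}\to\mathbb{R}$, $\nu_\gamma:=\nu(\cdot,\gamma)$, \emph{identifies} $\Gamma$ if for all $\phi\in\Delta(\mathcal{Y})$, $\gamma\in\mathcal{V}$: $\mathbb{E}_\phi[\nu_\gamma]=0\iff\gamma\in\Gamma(\phi)$. Available gambles: $\mathcal{G}_{\mathcal{P}}=\{g\in C(\mathcal{Y}):\sup_{\phi\in\mathcal{P}}\mathbb{E}_\phi[g]\le0\}$. *)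

From mathcomp Require Import all_boot all_order all_algebra.
From mathcomp Require Import all_classical all_reals ereal.
Set Implicit Arguments. Unset Strict Implicit. Unset Printing Implicit Defensive.
Import Order.TTheory GRing.Theory Num.Theory.
Local Open Scope ring_scope.
Local Open Scope classical_set_scope.

(* Finite outcome space Y (a finType); C(Y) = Y -> R (discrete topology). *)

Definition simplex (R : realType) (Y : finType) : set (Y -> R) :=
  [set phi | (forall y, 0 <= phi y) /\ \sum_(y : Y) phi y = 1].

Definition expect (R : realType) (Y : finType) (phi f : Y -> R) : R :=
  \sum_(y : Y) phi y * f y.

Definition level_set (R : realType) (Y : finType) (V : Type)
  (Gamma : (Y -> R) -> set V) (gamma : V) : set (Y -> R) :=
  [set phi | @simplex R Y phi /\ Gamma phi gamma].

Definition identifies (R : realType) (Y : finType) (V : Type)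
  (nu : Y -> V -> R) (Gamma : (Y -> R) -> set V) : Prop :=
  forall phi, @simplex R Y phi -> forall gamma : V,
    expect phi (fun y => nu y gamma) = 0 <-> Gamma phi gamma.

Definition available_gambles (R : realType) (Y : finType) (P : set (Y -> R))
  : set (Y -> R) :=
  [set g | (ereal_sup [set (expect phi g)%:E | phi in P] <= 0)%E].

(* The inclusion from left to right is immediate: [g <= alpha nu_gamma] gives
   [E_phi[g] <= alpha E_phi[nu_gamma] = 0] on the level set.  Conversely, let
   [g] have nonpositive expectation under every [phi] with
   [E_phi[nu_gamma] = 0].  Point masses at zeros of [nu_gamma] give [g <= 0]
   there, and for [nu_gamma y > 0 > nu_gamma y'] the two-point distribution
   on [y, y'] annihilating [nu_gamma] gives [g y / nu_gamma y <= g y' / nu_gamma y'].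
   Any [alpha] lying between the ratios on the positive and on the negative
   part of [nu_gamma] then satisfies [g <= alpha nu_gamma]; since these are
   finitely many reals, no closure is needed. *)
From mathcomp Require Import all_boot all_order all_algebra.
From mathcomp Require Import all_classical all_reals ereal.
From mathcomp Require Import ring lra.
Set Implicit Arguments. Unset Strict Implicit. Unset Printing Implicit Defensive.
Import Order.TTheory GRing.Theory Num.Theory.
Local Open Scope ring_scope.
Local Open Scope classical_set_scope.

Section Expectation.
Variables (R : realType) (Y : finType).
Implicit Types (phi psi f g h : Y -> R) (a b : R).

Definition point_mass (y : Y) : Y -> R := fun z => (z == y)%:R.

Definition mixture a phi b psi : Y -> R := fun z => a * phi z + b * psi z.

Lemma expect_point_mass y h : expect (point_mass y) h = h y.
Proof.
rewrite /expect (bigD1 y) //= /point_mass eqxx mul1r big1 ?addr0 // => z /negbTE ->.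
by rewrite mul0r.
Qed.

Lemma expect_mixture a phi b psi h :
  expect (mixture a phi b psi) h = a * expect phi h + b * expect psi h.
Proof.
rewrite /expect !mulr_sumr -big_split /=; apply: eq_bigr => z _.
by rewrite /mixture mulrDl !mulrA.
Qed.

Lemma expect_cst1 phi : expect phi (fun=> 1) = \sum_(y : Y) phi y.
Proof. by apply: eq_bigr => y _; rewrite mulr1. Qed.

Lemma simplex_point_mass y : simplex (point_mass y).
Proof.
split=> [z|]; first by rewrite ler0n.
by rewrite -expect_cst1 expect_point_mass.
Qed.

Lemma simplex_mixture a phi b psi : 0 <= a -> 0 <= b -> a + b = 1 ->
  simplex phi -> simplex psi -> simplex (mixture a phi b psi).
Proof.
move=> a0 b0 ab [phi0 phi1] [psi0 psi1]; split=> [z|].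
  by apply: addr_ge0; apply: mulr_ge0.
by rewrite -expect_cst1 expect_mixture !expect_cst1 phi1 psi1 !mulr1.
Qed.

Lemma expect_le_scale_zero phi f g alpha : simplex phi ->
  (forall y, g y <= alpha * f y) -> expect phi f = 0 -> expect phi g <= 0.
Proof.
move=> [phi0 _] le_g_f phi_f; rewrite -(mulr0 alpha) -phi_f /expect mulr_sumr.
by apply: ler_sum => y _; rewrite mulrCA; apply: ler_wpM2l.
Qed.

End Expectation.

Section Domination.
Variables (R : realType) (Y : finType) (f g : Y -> R).

(* Weights proportional to [- f y'] and [f y] make the expectation of [f]
   vanish; they are nonnegative exactly when [f] changes sign from [y] to [y']. *)
Definition balanced_mass (y y' : Y) : Y -> R :=
  mixture (- f y' / (f y - f y')) (point_mass R y)
          (f y / (f y - f y')) (point_mass R y').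

Lemma expect_balanced_mass y y' h : f y - f y' != 0 ->
  expect (balanced_mass y y') h = (- f y' * h y + f y * h y') / (f y - f y').
Proof.
by move=> d_neq0; rewrite expect_mixture !expect_point_mass; field.
Qed.

Section SignChange.
Variables (y y' : Y).
Hypotheses (fy_gt0 : 0 < f y) (fy'_lt0 : f y' < 0).

Let d_gt0 : 0 < f y - f y'. Proof. by rewrite subr_gt0 (lt_trans fy'_lt0). Qed.

Lemma simplex_balanced_mass : simplex (balanced_mass y y').
Proof.
apply: simplex_mixture; try exact: simplex_point_mass.
1,2: by rewrite divr_ge0 ?ltW ?oppr_gt0.
by rewrite -mulrDl addrC divff // gt_eqF.
Qed.

Lemma expect_balanced_mass_annihilates : expect (balanced_mass y y') f = 0.
Proof.
by rewrite expect_balanced_mass ?gt_eqF // mulNr (mulrC (f y)) addNr mul0r.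
Qed.

Lemma le_ratio_of_balanced_mass : expect (balanced_mass y y') g <= 0 ->
  g y / f y <= g y' / f y'.
Proof.
rewrite expect_balanced_mass ?gt_eqF // pmulr_lle0 ?invr_gt0 // => le_mix.
by rewrite ler_pdivrMr // mulrAC ler_ndivlMr //; nra.
Qed.

End SignChange.

(* Taking [alpha] the largest ratio on the positive part of [f]; the default
   [- S] keeps it below every ratio on the negative part when that part is
   the only nonempty one. *)
Lemma le_scale_of_ratios :
  (forall y, f y = 0 -> g y <= 0) ->
  (forall y y', 0 < f y -> f y' < 0 -> g y / f y <= g y' / f y') ->
  exists alpha, forall y, g y <= alpha * f y.
Proof.
move=> g_zero le_ratios.
set S := \sum_(y : Y) `|g y / f y|.
exists (\big[Order.max/ - S]_(y | 0 < f y) (g y / f y)) => y.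
have [fy_gt0 | fy_lt0 | fy0] := ltgtP 0 (f y).
- by rewrite -ler_pdivrMr //; exact: (le_bigmax_cond _ _ fy_gt0).
- rewrite -ler_ndivlMr //; apply: bigmax_le => [|z fz_gt0]; last exact: le_ratios.
  have : `|g y / f y| <= S by rewrite /S (bigD1 y) //= lerDl sumr_ge0.
  by move/ler_normlP => [? _]; rewrite lerNl.
- by rewrite -fy0 mulr0; exact: g_zero.
Qed.

Lemma le_scale_of_expect_annihilator :
  (forall phi, simplex phi -> expect phi f = 0 -> expect phi g <= 0) ->
  exists alpha, forall y, g y <= alpha * f y.
Proof.
move=> annih; apply: le_scale_of_ratios => [y fy0 | y y' fy_gt0 fy'_lt0].
  have := annih _ (simplex_point_mass R y).
  by rewrite !expect_point_mass; apply.
apply: le_ratio_of_balanced_mass => //; apply: annih.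
  exact: simplex_balanced_mass.
exact: expect_balanced_mass_annihilates.
Qed.

End Domination.

Lemma available_gamblesP (R : realType) (Y : finType) (P : set (Y -> R)) g :
  available_gambles P g <-> forall phi, P phi -> expect phi g <= 0.
Proof.
split=> [g_avail phi Pphi | le0].
  rewrite -lee_fin; apply: le_trans g_avail.
  by apply: ereal_sup_ubound; exists phi.
by apply: ge_ereal_sup => _ [phi Pphi <-]; rewrite lee_fin le0.
Qed.

Theorem mainTheorem9 (R : realType) (Y : finType) (V : Type)
  (Gamma : (Y -> R) -> set V) (nu : Y -> V -> R) :
  identifies nu Gamma ->
  forall gamma : V, level_set Gamma gamma !=set0 ->
    [set g : Y -> R | exists alpha : R, forall y, g y <= alpha * nu y gamma]
    = available_gambles (level_set Gamma gamma).
Proof.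
move=> id_nu gamma _; apply/seteqP; split=> g /=.
- move=> [alpha le_g]; apply/available_gamblesP => phi [phi_simplex Gphi].
  apply: (expect_le_scale_zero phi_simplex le_g).
  exact: (id_nu _ phi_simplex gamma).2.
- move/available_gamblesP => avail.
  apply: le_scale_of_expect_annihilator => phi phi_simplex phi_nu.
  by apply: avail; split; last exact: (id_nu _ phi_simplex gamma).1.
Qed.
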